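(* Let $k$ be a field and $R=k[x_1,\dots,x_n]$. If a polynomial $f\in R$ is computed by a formula of size $s$, then the diagram $R\xrightarrow{f}R$ (the $R$-module map sending $1\mapsto f$) is computed by a colimit computation in the category $R\text{-}\mathbf{Mod}$ of $R$-modules, with the basic morphisms listed below, of cost $O(s)$.
   Context: Basic morphisms in $R\text{-}\mathbf{Mod}$ (each of unit cost): multiplication by $x_i$, $R\xrightarrow{x_i}R$, for $i=1,\dots,n$; multiplication by $c$, $R\xrightarrow{c}R$, for each $c\in k$; the two inclusions $i_1,i_2:R\to R\oplus R$; the diagonal $\Delta:R\to R\oplus R$; the sum $+:R\oplus R\to R$; and $R\to\{0\}$. A formula is an arithmetic circuit (a finite directed acyclic graph whose indegree-$0$ vertices are labeled by variables or elements of $k$ and other vertices by $+$ or $\times$) in which every intermediate result is used at most once (the underlying graph is a tree); its size is the number of vertices. A diagram of finite shape $I=(V,E,s,t)$ assigns objects to vertices and morphisms $D(e):D(s(e))\to D(t(e))$ to edges (no commutativity required); subdiagrams are restrictions to full subgraphs. A colimit computation is a sequence of diagrams $(D_0,\dots,D_s)$ where $D_0$ consists only of basic morphisms and each $D_i$ ($i\ge1$) is obtained from $D_{i-1}$ by choosing a full subgraph $J_i$, adding a new vertex $v_i$ carrying a colimit of $D_{i-1}|_{J_i}$ and edges from each vertex of $J_i$ to $v_i$ carrying the colimit cocone morphisms, subject to constructivity: if $v_i$ lies in $J_j$ for some $j>i$ then $J_i\subseteq J_j$. It computes a diagram $D$ if $D$ is isomorphic to a not-necessarily-full subdiagram of $D_s$.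 Its cost is $s$ plus the number of edges of $D_0$. *)

From HB Require Import structures.
From mathcomp Require Import all_boot all_order all_algebra.
From mathcomp Require Import mpoly.
Set Implicit Arguments. Unset Strict Implicit. Unset Printing Implicit Defensive.
Import GRing.Theory.
Local Open Scope ring_scope.

Section ColimComp.
Variables (k : fieldType) (n : nat).

Notation R := {mpoly k[n]}.
Notation RMod := (lmodType R).

Inductive formula : Type :=
  | FVar of 'I_n
  | FConst of k
  | FAdd of formula & formula
  | FMul of formula & formula.

Fixpoint fsize (phi : formula) : nat :=
  match phi with
  | FVar _ | FConst _ => 1
  | FAdd a b | FMul a b => (fsize a + fsize b).+1
  end.

Fixpoint feval (phi : formula) : R :=
  match phi with
  | FVar i => 'X_i
  | FConst c => c%:MP
  | FAdd a b => feval a + feval b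
  | FMul a b => feval a * feval b
  end.

Definition computed_by_formula_of_size (f : R) (s : nat) : Prop :=
  exists phi : formula, feval phi = f /\ fsize phi = s.

Record diagram := Diagram {
  dV : finType;
  dE : finType;
  dobj : dV -> RMod;
  dsrc : dE -> dV;
  dtgt : dE -> dV;
  dmor : forall e : dE, {linear dobj (dsrc e) -> dobj (dtgt e)} }.

(* (L, c) is a colimit (in R-Mod) of the full subdiagram of D on the vertex set J;
   c v is only relevant for v \in J. *)
Definition is_colimit (D : diagram) (J : {set dV D}) (L : RMod)
    (c : forall v : dV D, {linear dobj v -> L}) : Prop :=
  (forall e : dE D, dsrc e \in J -> dtgt e \in J ->
     forall x, c (dtgt e) (dmor e x) = c (dsrc e) x) /\
  (forall (M : RMod) (d : forall v : dV D, {linear dobj v -> M}),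
     (forall e : dE D, dsrc e \in J -> dtgt e \in J ->
        forall x, d (dtgt e) (dmor e x) = d (dsrc e) x) ->
     (exists u : {linear L -> M}, forall v, v \in J -> forall x, u (c v x) = d v x) /\
     (forall u u' : {linear L -> M},
        (forall v, v \in J -> forall x, u (c v x) = d v x) ->
        (forall v, v \in J -> forall x, u' (c v x) = d v x) ->
        u =1 u')).

Inductive otag := OR | OR2 | O0.

Definition bobj (a : otag) : RMod :=
  match a with
  | OR => R^o
  | OR2 => (R^o * R^o)%type
  | O0 => 'rV[R]_0   (* the zero module {0} *)
  end.

Definition is_basic (a b : otag) : (bobj a -> bobj b) -> Prop :=
  match a as a0, b as b0 return (bobj a0 -> bobj b0) -> Prop with
  | OR, OR => fun g =>
      (exists i : 'I_n, forall x : R, g x = 'X_i * x) \/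
      (exists c : k, forall x : R, g x = c%:MP * x)
  | OR, OR2 => fun g =>
      (forall x : R, g x = (x, 0)) \/
      (forall x : R, g x = (0, x)) \/
      (forall x : R, g x = (x, x))
  | OR2, OR => fun g => forall x : R * R, g x = x.1 + x.2
  | OR, O0 => fun _ => True
  | _, _ => fun _ => False
  end.

(* A colimit computation (D_0, ..., D_s) is encoded by its data:
   - the initial diagram D_0 (vertex set V0, edge set E0, every vertex carrying a
     basic object and every edge a basic morphism);
   - the number s of steps; the new vertex v_i of step i (i : 'I_s) is [inr i], so
     the vertex set of D_s is V0 + 'I_s;
   - for each step i the chosen vertex set J_i, the colimit object L_i and the
     cocone morphisms coc i v : D(v) -> L_i (relevant for v \in J_i).
   The edges of D_s are the edges of D_0 together with one edge v -> v_i carrying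
   coc i v for every step i and every v \in J_i. *)

Definition cobj (V0 : finType) (vtag : V0 -> otag) (s : nat) (L : 'I_s -> RMod)
    (v : (V0 + 'I_s)%type) : RMod :=
  match v with inl a => bobj (vtag a) | inr j => L j end.

Record colim_comp := ColimComp {
  V0 : finType;
  E0 : finType;
  vtag : V0 -> otag;
  src0 : E0 -> V0;
  tgt0 : E0 -> V0;
  mor0 : forall e : E0, {linear bobj (vtag (src0 e)) -> bobj (vtag (tgt0 e))};
  nsteps : nat;
  Jset : 'I_nsteps -> {set (V0 + 'I_nsteps)%type};
  Lobj : 'I_nsteps -> RMod;
  coc : forall (i : 'I_nsteps) (v : (V0 + 'I_nsteps)%type),
          {linear cobj vtag Lobj v -> Lobj i} }.
Arguments vtag : clear implicits. Arguments src0 : clear implicits.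
Arguments tgt0 : clear implicits. Arguments mor0 : clear implicits.
Arguments Jset : clear implicits. Arguments Lobj : clear implicits.
Arguments coc : clear implicits.

Definition cc_edge (C : colim_comp) : finType :=
  (E0 C + {p : 'I_(nsteps C) * (V0 C + 'I_(nsteps C))%type | p.2 \in Jset C p.1})%type.

Definition cc_src (C : colim_comp) (e : cc_edge C) : (V0 C + 'I_(nsteps C))%type :=
  match e with inl e0 => inl (src0 C e0) | inr p => (val p).2 end.

Definition cc_tgt (C : colim_comp) (e : cc_edge C) : (V0 C + 'I_(nsteps C))%type :=
  match e with inl e0 => inl (tgt0 C e0) | inr p => inr (val p).1 end.

Definition cc_mor (C : colim_comp) (e : cc_edge C) :
    {linear cobj (vtag C) (Lobj C) (cc_src e) -> cobj (vtag C) (Lobj C) (cc_tgt e)} :=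
  match e as e' return
    {linear cobj (vtag C) (Lobj C) (cc_src e') -> cobj (vtag C) (Lobj C) (cc_tgt e')}
  with
  | inl e0 => mor0 C e0
  | inr p => coc C (val p).1 (val p).2
  end.

Definition final_diagram (C : colim_comp) : diagram :=
  @Diagram (V0 C + 'I_(nsteps C))%type (cc_edge C)
    (cobj (vtag C) (Lobj C)) (@cc_src C) (@cc_tgt C) (@cc_mor C).

(* Validity:
   - D_0 consists only of basic morphisms;
   - J_i is a set of vertices of D_{i-1} (i.e. of V0 and of earlier new vertices);
   - (L_i, coc i) is a colimit of the full subdiagram of D_{i-1} on J_i (which is
     the same as the full subdiagram of D_s on J_i, since J_i only contains
     vertices of D_{i-1} and D_{i-1} is a full subdiagram of D_s);
   - constructivity: if v_i \in J_j with j > i then J_i \subset J_j. *)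
Definition valid_cc (C : colim_comp) : Prop :=
  (forall e : E0 C, is_basic (mor0 C e)) /\
  (forall (i : 'I_(nsteps C)) (j : 'I_(nsteps C)), inr j \in Jset C i -> (j < i)%N) /\
  (forall i : 'I_(nsteps C), @is_colimit (final_diagram C) (Jset C i) (Lobj C i) (coc C i)) /\
  (forall (i j : 'I_(nsteps C)), (i < j)%N -> inr i \in Jset C j ->
      Jset C i \subset Jset C j).

Definition cc_cost (C : colim_comp) : nat := (nsteps C + #|E0 C|)%N.

Definition is_lin_iso (A B : RMod) (g : {linear A -> B}) : Prop :=
  exists h : B -> A, cancel g h /\ cancel h g.

(* C computes the diagram  R --f--> R  (two distinct vertices, one edge carrying
   multiplication by f): it is isomorphic to a (not necessarily full) subdiagram
   of D_s, i.e. some edge e of D_s between two distinct vertices, together with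
   isomorphisms a1 : R ~ D_s(src e), a2 : R ~ D_s(tgt e) making the square commute. *)
Definition computes_mul (C : colim_comp) (f : R) : Prop :=
  exists e : dE (final_diagram C),
    dsrc e != dtgt e /\
    exists (a1 : {linear R^o -> dobj (dsrc e)}) (a2 : {linear R^o -> dobj (dtgt e)}),
      is_lin_iso a1 /\ is_lin_iso a2 /\
      forall x : R^o, dmor e (a1 x) = a2 (f * x).

End ColimComp.

From HB Require Import structures.
From mathcomp Require Import all_boot all_order all_algebra.
From mathcomp Require Import mpoly.
From mathcomp Require Import zify.
Set Implicit Arguments. Unset Strict Implicit. Unset Printing Implicit Defensive.
Import GRing.Theory.
Local Open Scope ring_scope.

(* A formula is turned, by induction, into a diagram of basic morphisms (a
   gadget) with an input and an output copy of R, together with a cocone to R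
   whose leg at the output is the identity and whose leg at the input is
   multiplication by the polynomial computed.  Every cocone of the gadget
   factors through its leg at the output, so this cocone is a colimit and a
   single colimit step produces the edge R --f--> R.  A leaf is one edge x_i or
   c.  For a product the output of the first gadget is joined to the input of
   the second by an edge 1, so the legs multiply.  For a sum the two outputs are
   joined by an edge 1, and the two inputs are sent by i_1 and i_2 into a new
   copy of R ⊕ R which also receives a new input by the diagonal: the leg
   (x, y) |-> f x + g y precomposed with the diagonal is multiplication by
   f + g.  Each step adds at most four edges, so the cost is at most 5 s. *)

Inductive injection := InjL | InjR | Diag.

Definition injection_code (j : injection) : option bool :=
  match j with InjL => Some true | InjR => Some false | Diag => None end.
Definition injection_decode (o : option bool) : injection :=
  match o with Some true => InjL | Some false => InjR | None => Diag end.
Lemma injection_codeK : cancel injection_code injection_decode.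
Proof. by case. Qed.
HB.instance Definition _ := Finite.copy injection (can_type injection_codeK).

Lemma card_injection : #|{: injection}| = 3%N.
Proof.
have decodeK : cancel injection_decode injection_code by case=> [[]|].
by rewrite (bij_eq_card (Bijective injection_codeK decodeK)) card_option card_bool.
Qed.

Section Gadgets.
Variables (k : fieldType) (n : nat).
Notation R := {mpoly k[n]}.

Definition inject (j : injection) (x : R^o) : R^o * R^o :=
  match j with InjL => (x, 0) | InjR => (0, x) | Diag => (x, x) end.

Fact inject_is_linear j : linear (inject j).
Proof.
by case: j => a x y; apply/pair_equal_spec; rewrite /= ?scaler0 ?addr0.
Qed.
HB.instance Definition _ j :=
  GRing.isLinear.Build R R^o (R^o * R^o)%type _ (inject j) (inject_is_linear j).

Lemma pair_inject_split (x y : R^o) : (x, y) = inject InjL x + inject InjR y.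
Proof. by apply/pair_equal_spec; rewrite /= addr0 add0r. Qed.

Definition combine (w x : R^o * R^o) : R^o := w.1 * x.1 + w.2 * x.2.

Fact combine_is_linear w : linear (combine w).
Proof.
move=> a x y; rewrite /combine /= /GRing.scale /= !mulrDr !mulrA.
by rewrite [w.1 * a]mulrC [w.2 * a]mulrC addrACA.
Qed.
HB.instance Definition _ w :=
  GRing.isLinear.Build R (R^o * R^o)%type R^o _ (combine w) (combine_is_linear w).

Lemma combineZ c w x : combine (c *: w) x = c * combine w x.
Proof. by rewrite /combine mulrDr !mulrA. Qed.

Inductive multiplier := MulVar of 'I_n | MulConst of k.

Definition multiplier_val (m : multiplier) : R :=
  match m with MulVar i => 'X_i | MulConst c => c%:MP end.

(* A diagram of basic morphisms with vertices [rvert] carrying R, vertices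
   [pvert] carrying R ⊕ R, edges [medge] multiplying by x_i or c, and edges
   [iedge] carrying i_1, i_2 or the diagonal; [rweight] and [pweight] describe a
   cocone to R, the legs being [x |-> rweight v * x] and [combine (pweight z)]. *)
Record gadget := Gadget {
  rvert : finType;
  pvert : finType;
  input : rvert;
  output : rvert;
  medge : finType;
  msrc : medge -> rvert;
  mtgt : medge -> rvert;
  mlabel : medge -> multiplier;
  iedge : finType;
  isrc : iedge -> rvert;
  itgt : iedge -> pvert;
  ikind : iedge -> injection;
  rweight : rvert -> R;
  pweight : pvert -> R^o * R^o }.

Definition is_gadget_cocone (G : gadget) (M : lmodType R)
    (dr : rvert G -> R^o -> M) (dp : pvert G -> R^o * R^o -> M) : Prop :=
  (forall e x, dr (mtgt e) (multiplier_val (mlabel e) * x) = dr (msrc e) x) /\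
  (forall e x, dp (itgt e) (inject (ikind e) x) = dr (isrc e) x).
Arguments is_gadget_cocone G {M}.

Definition gadget_computes (G : gadget) (f : R) : Prop :=
  [/\ rweight (input G) = f, rweight (output G) = 1,
      @is_gadget_cocone G R^o (fun v x => rweight v * x)
        (fun z => combine (pweight z))
    & forall (M : lmodType R) (dr : rvert G -> {linear R^o -> M})
             (dp : pvert G -> {linear (R^o * R^o)%type -> M}),
        is_gadget_cocone G (fun v => dr v) (fun z => dp z) ->
        (forall v x, dr v x = dr (output G) (rweight v * x)) /\
        (forall z x, dp z x = dr (output G) (combine (pweight z) x))].

Definition gadget_edges (G : gadget) : nat := #|medge G| + #|iedge G|.

Definition leaf_gadget (m : multiplier) : gadget := {|
  rvert := bool; pvert := void; input := false; output := true;
  medge := unit; msrc _ := false; mtgt _ := true; mlabel _ := m;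
  iedge := void; isrc := of_void _; itgt := of_void _; ikind := of_void _;
  rweight v := if v then 1 else multiplier_val m; pweight := of_void _ |}.

Lemma leaf_gadget_computes m : gadget_computes (leaf_gadget m) (multiplier_val m).
Proof.
split=> //; first by split=> [[] x|[]] //=; rewrite mul1r.
move=> M dr dp [dm _]; split=> [[] x|[]] /=; first by rewrite mul1r.
by rewrite -(dm tt).
Qed.

Section Sum.
Variables A B : gadget.

Definition add_gadget : gadget := {|
  rvert := (rvert A + rvert B + unit)%type;
  pvert := (pvert A + pvert B + unit)%type;
  input := inr tt;
  output := inl (inl (output A));
  medge := (medge A + medge B + unit)%type;
  msrc e := match e with
    | inl (inl e) => inl (inl (msrc e))
    | inl (inr e) => inl (inr (msrc e))
    | inr _ => inl (inr (output B)) end;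
  mtgt e := match e with
    | inl (inl e) => inl (inl (mtgt e))
    | inl (inr e) => inl (inr (mtgt e))
    | inr _ => inl (inl (output A)) end;
  mlabel e := match e with
    | inl (inl e) => mlabel e
    | inl (inr e) => mlabel e
    | inr _ => MulConst 1 end;
  iedge := (iedge A + iedge B + injection)%type;
  isrc e := match e with
    | inl (inl e) => inl (inl (isrc e))
    | inl (inr e) => inl (inr (isrc e))
    | inr InjL => inl (inl (input A))
    | inr InjR => inl (inr (input B))
    | inr Diag => inr tt end;
  itgt e := match e with
    | inl (inl e) => inl (inl (itgt e))
    | inl (inr e) => inl (inr (itgt e))
    | inr _ => inr tt end;
  ikind e := match e with
    | inl (inl e) => ikind e
    | inl (inr e) => ikind e
    | inr j => j end;
  rweight v := match v with
    | inl (inl v) => rweight v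
    | inl (inr v) => rweight v
    | inr _ => rweight (input A) + rweight (input B) end;
  pweight z := match z with
    | inl (inl z) => pweight z
    | inl (inr z) => pweight z
    | inr _ => (rweight (input A), rweight (input B)) end |}.

Lemma add_gadget_computes fa fb :
  gadget_computes A fa -> gadget_computes B fb ->
  gadget_computes add_gadget (fa + fb).
Proof.
move=> [inA outA [mA iA] univA] [inB outB [mB iB] univB].
split=> /=; [by rewrite inA inB | exact: outA | split | ].
- by case=> [[e|e]|[]] x /=; rewrite ?mA ?mB // outA outB !mul1r.
- case=> [[e|e]|[]] x /=; rewrite ?iA ?iB // /combine /= ?mulr0 ?addr0 ?add0r //.
  by rewrite mulrDl.
move=> M dr dp [dm di].
have [rA pA] := univA M (fun v => dr (inl (inl v))) (fun z => dp (inl (inl z)))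
  (conj (fun e => dm (inl (inl e))) (fun e => di (inl (inl e)))).
have [rB pB] := univB M (fun v => dr (inl (inr v))) (fun z => dp (inl (inr z)))
  (conj (fun e => dm (inl (inr e))) (fun e => di (inl (inr e)))).
have outBA x : dr (inl (inr (output B))) x = dr (inl (inl (output A))) x.
  by rewrite -(dm (inr tt)) /= mul1r.
have newp x : dp (inr tt) x = dr (inl (inl (output A)))
    (combine (rweight (input A), rweight (input B)) x).
  case: x => x y; rewrite {1}(pair_inject_split x y) linearD.
  move: (di (inr InjL) x) (di (inr InjR) y) => /= -> ->.
  by rewrite (rA (input A)) (rB (input B)) outBA -linearD.
split=> [[[v|v]|[]] x|[[z|z]|[]] x] /=.
- exact: rA.
- by rewrite rB outBA.
- by move: (di (inr Diag) x) => /= <-; rewrite newp /combine /= mulrDl.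
- exact: pA.
- by rewrite pB outBA.
- exact: newp.
Qed.

End Sum.

Section Product.
Variables A B : gadget.

Definition mul_gadget : gadget := {|
  rvert := (rvert A + rvert B)%type;
  pvert := (pvert A + pvert B)%type;
  input := inl (input A);
  output := inr (output B);
  medge := (medge A + medge B + unit)%type;
  msrc e := match e with
    | inl (inl e) => inl (msrc e)
    | inl (inr e) => inr (msrc e)
    | inr _ => inl (output A) end;
  mtgt e := match e with
    | inl (inl e) => inl (mtgt e)
    | inl (inr e) => inr (mtgt e)
    | inr _ => inr (input B) end;
  mlabel e := match e with
    | inl (inl e) => mlabel e
    | inl (inr e) => mlabel e
    | inr _ => MulConst 1 end;
  iedge := (iedge A + iedge B)%type;
  isrc e := match e with inl e => inl (isrc e) | inr e => inr (isrc e) end;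
  itgt e := match e with inl e => inl (itgt e) | inr e => inr (itgt e) end;
  ikind e := match e with inl e => ikind e | inr e => ikind e end;
  rweight v := match v with
    | inl v => rweight (input B) * rweight v
    | inr v => rweight v end;
  pweight z := match z with
    | inl z => rweight (input B) *: pweight z
    | inr z => pweight z end |}.

Lemma mul_gadget_computes fa fb :
  gadget_computes A fa -> gadget_computes B fb ->
  gadget_computes mul_gadget (fa * fb).
Proof.
move=> [inA outA [mA iA] univA] [inB outB [mB iB] univB].
split=> /=; [by rewrite inA inB mulrC | exact: outB | split | ].
- case=> [[e|e]|[]] x /=; rewrite ?mB // ?outA ?mulr1 ?mul1r //.
  by rewrite -mulrA mA mulrA.
- by case=> e x /=; rewrite ?combineZ ?iA ?iB ?mulrA.
move=> M dr dp [dm di].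
have [rA pA] := univA M (fun v => dr (inl v)) (fun z => dp (inl z))
  (conj (fun e => dm (inl (inl e))) (fun e => di (inl e))).
have [rB pB] := univB M (fun v => dr (inr v)) (fun z => dp (inr z))
  (conj (fun e => dm (inl (inr e))) (fun e => di (inr e))).
have outAB x : dr (inl (output A)) x = dr (inr (output B)) (rweight (input B) * x).
  by rewrite -(dm (inr tt)) /= mul1r rB.
split=> [[v|v] x|[z|z] x] /=.
- by rewrite rA outAB mulrA.
- exact: rB.
- by rewrite pA outAB combineZ.
- exact: pB.
Qed.

End Product.

Fixpoint formula_gadget (phi : formula k n) : gadget :=
  match phi with
  | FVar i => leaf_gadget (MulVar i)
  | FConst c => leaf_gadget (MulConst c)
  | FAdd a b => add_gadget (formula_gadget a) (formula_gadget b)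
  | FMul a b => mul_gadget (formula_gadget a) (formula_gadget b)
  end.

Lemma formula_gadget_computes phi :
  gadget_computes (formula_gadget phi) (feval phi).
Proof.
elim: phi => [i|c|a IHa b IHb|a IHa b IHb] /=.
- exact: leaf_gadget_computes.
- exact: leaf_gadget_computes.
- exact: add_gadget_computes.
- exact: mul_gadget_computes.
Qed.

Lemma formula_gadget_edges phi :
  (gadget_edges (formula_gadget phi) <= 4 * fsize phi)%N.
Proof.
rewrite /gadget_edges; elim: phi => [i|c|a IHa b IHb|a IHa b IHb] /=;
  rewrite ?card_sum ?card_injection ?card_unit ?card_void //; lia.
Qed.

Definition is_cocone (D : diagram k n) (J : {set dV D}) (M : lmodType R)
    (d : forall v : dV D, {linear dobj v -> M}) : Prop :=
  forall e : dE D, dsrc e \in J -> dtgt e \in J ->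
    forall x, d (dtgt e) (dmor e x) = d (dsrc e) x.

Lemma split_cocone_is_colimit (D : diagram k n) (J : {set dV D}) (L : lmodType R)
    (c : forall v : dV D, {linear dobj v -> L})
    (t : dV D) (g : {linear L -> dobj t}) :
  t \in J -> is_cocone J c -> (forall y, c t (g y) = y) ->
  (forall (M : lmodType R) (d : forall v : dV D, {linear dobj v -> M}),
     is_cocone J d -> forall v, v \in J -> forall x, d v x = d t (g (c v x))) ->
  is_colimit J c.
Proof.
move=> tJ cc cgK dfactor; split=> // M d dd; split.
  by exists (d t \o g) => v vJ x; rewrite /= -dfactor.
by move=> u u' uc u'c y; rewrite -[y]cgK uc // u'c.
Qed.

Section GadgetComputation.
Variable G : gadget.

Definition gadget_vtag (v : rvert G + pvert G) : otag :=
  if v is inl _ then OR else OR2.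

Definition gadget_src (e : medge G + iedge G) : rvert G + pvert G :=
  match e with inl e => inl (msrc e) | inr e => inl (isrc e) end.

Definition gadget_tgt (e : medge G + iedge G) : rvert G + pvert G :=
  match e with inl e => inl (mtgt e) | inr e => inr (itgt e) end.

Definition gadget_mor (e : medge G + iedge G) :
    {linear bobj k n (gadget_vtag (gadget_src e)) ->
            bobj k n (gadget_vtag (gadget_tgt e))} :=
  match e with
  | inl e => *:%R (multiplier_val (mlabel e)) : {linear R^o -> R^o}
  | inr e => inject (ikind e)
  end.

Definition initial_vertices : {set (rvert G + pvert G) + 'I_1} :=
  [set v | if v is inl _ then true else false].

(* The leg at the new vertex itself is arbitrary: it is not in the chosen set. *)
Definition gadget_leg (v : (rvert G + pvert G) + 'I_1) :
    {linear cobj gadget_vtag (fun _ => R^o) v -> R^o} :=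
  match v with
  | inl (inl v) => *:%R (rweight v) : {linear R^o -> R^o}
  | inl (inr z) => combine (pweight z)
  | inr _ => \0
  end.

Definition gadget_cc : colim_comp k n :=
  @ColimComp k n (rvert G + pvert G)%type (medge G + iedge G)%type gadget_vtag
    gadget_src gadget_tgt gadget_mor 1
    (fun _ => initial_vertices) (fun _ => R^o)
    (fun _ => gadget_leg).

Lemma gadget_cc_valid f : gadget_computes G f -> valid_cc gadget_cc.
Proof.
move=> [_ out1 [wm wi] univ]; split; [|split; [|split]].
- case=> [e|e] /=; last by case: (ikind e); [left | right; left | right; right].
  by case: (mlabel e) => [i|c]; [left; exists i | right; exists c].
- by move=> i j; rewrite inE.
- move=> i; apply: (@split_cocone_is_colimit (final_diagram gadget_cc) _ _ _
    (inl (inl (output G))) (idfun : {linear R^o -> R^o})).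
  + by rewrite inE.
  + case=> [[e|e]|[[j v] vJ]] /= => [_ _|_ _|_]; [exact: wm | exact: wi |].
    by rewrite inE.
  + by move=> y; rewrite /= out1 [_ *: _]mul1r.
  move=> M d dd.
  have dcone :
      is_gadget_cocone G (fun v => d (inl (inl v))) (fun z => d (inl (inr z))).
    split=> e x; [apply: (dd (inl (inl e))) | apply: (dd (inl (inr e)))];
    by rewrite inE.
  have [dr dp] := univ M _ _ dcone.
  move=> [[v|z]|j] vJ x; [exact: dr | exact: dp | by rewrite inE in vJ].
- by move=> i j; rewrite !ord1.
Qed.

Lemma gadget_cc_computes f : gadget_computes G f -> computes_mul gadget_cc f.
Proof.
move=> [in_f _ _ _].
have inJ : inl (inl (input G)) \in initial_vertices by rewrite inE.
exists (inr (exist _ (ord0, inl (inl (input G))) inJ)); split=> //.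
exists idfun, idfun; split; [by exists idfun | split; first by exists idfun].
by move=> x; rewrite /= in_f.
Qed.

Lemma gadget_cc_cost : cc_cost gadget_cc = (1 + gadget_edges G)%N.
Proof. by rewrite /cc_cost /= card_sum. Qed.

End GadgetComputation.

End Gadgets.

Theorem proposition5p6 :
  exists c0 : nat,
    forall (k : fieldType) (n : nat) (f : {mpoly k[n]}) (s : nat),
      computed_by_formula_of_size f s ->
      exists C : colim_comp k n,
        valid_cc C /\ computes_mul C f /\ (cc_cost C <= c0 * s)%N.
Proof.
exists 5 => k n f s [phi [<- <-]].
have size_gt0 : (0 < fsize phi)%N by case: phi.
have phiG := formula_gadget_computes phi.
exists (gadget_cc (formula_gadget phi)); split; first exact: gadget_cc_valid phiG.
split; first exact: gadget_cc_computes phiG.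
by rewrite gadget_cc_cost; have := formula_gadget_edges phi; lia.
Qed.
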